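(* Let $F$ be a fixed real $3\times 3$ matrix of rank two. For a symmetric $3\times 3$ matrix $\omega^*$, define $$G(\omega^* ) = \frac{1}{2}\operatorname{tr}(F\omega^*F^{\mathrm T}\omega^* )\,F - F\omega^*F^{\mathrm T}\omega^*F.$$ Regard the nine entries $(G(\omega^* ))_{ij}$, $1\le i,j\le 3$, as polynomials in the six independent entries of $\omega^*$. Then at most three of these polynomials are linearly independent (over coefficients depending only on $F$). That is, the linear span of $\{(G(\omega^* ))_{ij}\}_{i,j=1}^{3}$ has dimension at most $3$.
   Context: In the paper's application, $F$ is a fundamental matrix and $\omega^* = KK^{\mathrm T}$ for an upper-triangular camera calibration matrix $K$. The equation $G(\omega^* ) = 0_{3\times 3}$ is then a system of self-calibration constraints on the entries of $\omega^*$. *)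

From HB Require Import structures.
From mathcomp Require Import all_boot all_order all_algebra.
Set Implicit Arguments. Unset Strict Implicit. Unset Printing Implicit Defensive.
Import Order.TTheory GRing.Theory Num.Theory.
Local Open Scope ring_scope.

Definition Gmap (R : realFieldType) (F w : 'M[R]_3) : 'M[R]_3 :=
  ((\tr (F *m w *m F^T *m w)) / 2%:R) *: F - F *m w *m F^T *m w *m F.

(* Write F = L D U with D = diag(1,1,0) (row/column echelon bases).  Then
   G(w) = L (tr(Z)/2 D - Z) U with Z = D Y D, Y = U w U^T D L^T w L, and
   tr(Z)/2 D - Z is a traceless 2x2 block, determined by the three scalars
   (Y11 - Y00)/2, Y01, Y10.  So every entry of G(w) is a linear combination,
   with coefficients depending on L and U only, of three polynomials in w,
   and any four entries are linearly dependent. *)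
From HB Require Import structures.
From mathcomp Require Import all_boot all_order all_algebra.
From mathcomp Require Import ring.
Set Implicit Arguments. Unset Strict Implicit. Unset Printing Implicit Defensive.
Import Order.TTheory GRing.Theory Num.Theory.
Local Open Scope ring_scope.

Section SpanDependence.
Variable R : fieldType.

Lemma exists_nonzero_left_kernel m n (M : 'M[R]_(m, n)) :
  (n < m)%N -> exists2 c : 'rV_m, c != 0 & c *m M = 0.
Proof.
move=> lt_nm; have : kermx M != 0.
  rewrite kermx_eq0 /row_free neq_ltn.
  by rewrite (leq_ltn_trans (rank_leq_col M) lt_nm).
by case/rowV0Pn=> c /sub_kermxP cM0 c_nz; exists c.
Qed.

Lemma dependent_in_span (T : Type) m n (f : 'I_m -> T -> R)
    (g : 'I_n -> T -> R) (a : 'I_m -> 'I_n -> R) :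
  (n < m)%N -> (forall k x, f k x = \sum_(t < n) a k t * g t x) ->
  exists c : 'I_m -> R,
    (exists k, c k != 0) /\ forall x, \sum_(k < m) c k * f k x = 0.
Proof.
move=> lt_nm f_span.
have [c c_nz cA0] := exists_nonzero_left_kernel (\matrix_(k, t) a k t) lt_nm.
exists (c 0); split.
  by apply/existsP; apply: contraNT c_nz => /existsPn c0;
    apply/eqP/rowP => k; rewrite mxE; apply/eqP/negbNE/c0.
move=> x; under eq_bigr => k _ do rewrite f_span big_distrr.
rewrite exchange_big big1 // => t _.
have ca0 : \sum_(k < m) c 0 k * a k t = 0.
  by have /rowP/(_ t) := cA0; rewrite !mxE; under eq_bigr do rewrite mxE.
transitivity ((\sum_(k < m) c 0 k * a k t) * g t x); last by rewrite ca0 mul0r.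
by rewrite big_distrl; apply: eq_bigr => k _; exact: mulrA.
Qed.

End SpanDependence.

Definition i0 : 'I_3 := @Ordinal 3 0 isT.
Definition i1 : 'I_3 := @Ordinal 3 1 isT.
Definition i2 : 'I_3 := @Ordinal 3 2 isT.

Lemma sum3 (V : nmodType) (f : 'I_3 -> V) :
  \sum_(k < 3) f k = f i0 + f i1 + f i2.
Proof.
rewrite !big_ord_recr big_ord0 /= add0r.
by congr (f _ + f _ + f _); apply: val_inj.
Qed.

Section RankTwo.
Variable R : realFieldType.
Variables L U : 'M[R]_3.

Local Notation D := (pid_mx 2 : 'M[R]_3).

Definition pid2_coef (i j : 'I_3) (t : 'I_3) : R :=
  match val t with
  | 0 => L i i0 * U i0 j - L i i1 * U i1 j
  | 1 => L i i0 * U i1 j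
  | _ => L i i1 * U i0 j
  end.

Definition pid2_weight (w : 'M[R]_3) (t : 'I_3) : R :=
  let Y := U *m w *m U^T *m D *m L^T *m w *m L in
  match val t with
  | 0 => (Y i1 i1 - Y i0 i0) / 2%:R
  | 1 => - Y i0 i1
  | _ => - Y i1 i0
  end.

Lemma Gmap_pid2 (w : 'M[R]_3) :
  let Y := U *m w *m U^T *m D *m L^T *m w *m L in
  Gmap (L *m D *m U) w =
  (\tr (D *m Y *m D) / 2%:R) *: (L *m D *m U) - L *m (D *m Y *m D) *m U.
Proof.
move=> Y; have DD : D *m D = D by rewrite pid_mx_id.
rewrite /Gmap !trmx_mul tr_pid_mx; congr (_ / _ *: _ - _); last first.
  by rewrite /Y !mulmxA.
rewrite [RHS]mxtrace_mulC [D *m (D *m Y)]mulmxA DD /Y !mulmxA [RHS]mxtrace_mulC.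
by rewrite !mulmxA.
Qed.

Lemma pid2_sandwich_entry (Y : 'M[R]_3) i j :
  ((\tr (D *m Y *m D) / 2%:R) *: (L *m D *m U) - L *m (D *m Y *m D) *m U) i j
  = (Y i1 i1 - Y i0 i0) / 2%:R * (L i i0 * U i0 j - L i i1 * U i1 j)
    - Y i0 i1 * (L i i0 * U i1 j) - Y i1 i0 * (L i i1 * U i0 j).
Proof.
rewrite /mxtrace !(mxE, sum3) /i0 /i1 /i2 /=.
have two_nz : (2%:R : R) != 0 by rewrite pnatr_eq0.
by field.
Qed.

Lemma Gmap_pid2_entry (w : 'M[R]_3) i j :
  Gmap (L *m D *m U) w i j = \sum_(t < 3) pid2_coef i j t * pid2_weight w t.
Proof.
by rewrite Gmap_pid2 pid2_sandwich_entry sum3 /pid2_coef /pid2_weight /=; ring.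
Qed.

End RankTwo.

Theorem proposition3 (R : realFieldType) (F : 'M[R]_3) (hF : \rank F = 2%N) :
  forall p : 'I_4 -> 'I_3 * 'I_3,
  exists c : 'I_4 -> R,
    (exists k, c k != 0) /\
    forall w : 'M[R]_3, w^T = w ->
      \sum_(k < 4) c k * (Gmap F w) (p k).1 (p k).2 = 0.
Proof.
move=> p; have := mulmx_ebase F; rewrite hF => <-.
set L := col_ebase F; set U := row_ebase F.
have [c [c_nz c_dep]] := dependent_in_span
  (f := fun k w => Gmap (L *m pid_mx 2 *m U) w (p k).1 (p k).2)
  (g := fun t w => pid2_weight L U w t)
  (a := fun k => pid2_coef L U (p k).1 (p k).2)
  (isT : (3 < 4)%N) (fun k w => Gmap_pid2_entry L U w _ _).
by exists c; split=> // w _; apply: c_dep.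
Qed.
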